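(* Let $\Gamma$ be a network zero-sum game with a fully-mixed Nash equilibrium $x^*$ with rational coordinates such that $\sum_{j\neq i}A^{(ij)}x_j^*=\mathbf{0}$ for every agent $i$. Suppose the regularizers used in Stochastic FTRL satisfy $\nabla h_i^*(y_i)>\mathbf{0}$ (coordinatewise) for all $y\in\mathcal{Y}$ and all $i\in\mathcal{N}$. Then the Markov chain with state space $\mathcal{Y}$ and transition probabilities $\bar P$ is irreducible.
   Context: A network game has agents $\mathcal{N}=\{1,\dots,N\}$, finite pure strategy sets $\mathcal{S}_i$, simplices $\mathcal{X}_i$ of mixed strategies, $\mathcal{S}=\prod_i\mathcal{S}_i$, and payoff matrices $A^{(ij)}\in\mathbb{R}^{S_i\times S_j}$ ($i\ne j$); agent $i$'s expected payoff under $x$ is $\langle x_i,\sum_{j\ne i}A^{(ij)}x_j\rangle$. It is network zero-sum if $A^{(ij)}=-(A^{(ji)})^\top$. A Nash equilibrium $x^*$ satisfies $\langle x_i^*,\sum_{j\ne i}A^{(ij)}x_j^*\rangle\ge\langle x_i,\sum_{j\ne i}A^{(ij)}x_j^*\rangle$ for all $x_i\in\mathcal{X}_i$, $i$; it is fully mixed if all coordinates are positive. Each agent has a strictly convex regularizer $h_i$ on $\mathcal{X}_i$ (learning rate absorbed), conjugate $h_i^*(y_i)=\sup_{x_i\in\mathcal{X}_i}\{\langle y_i,x_i\rangle-h_i(x_i)\}$, and $\nabla h_i^*(y_i)=\arg\max_{x_i\in\mathcal{X}_i}\{\langle y_i,x_i\rangle-h_i(x_i)\}$ is the strategy played at payoff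 vector $y_i$. Fix an initial $y^0=(y_1^0,\dots,y_N^0)$. Define $\mathcal{Y}^0=\{y^0\}$ and $\mathcal{Y}^t=\{(y_i+\sum_{j\neq i}A^{(ij)}e_{s_j})_{i\in\mathcal{N}}: y\in\mathcal{Y}^{t-1},\ s\in\mathcal{S}\}$, and $\mathcal{Y}=\bigcup_{t\ge0}\mathcal{Y}^t$. The transition probabilities are $\bar P(y,y')=\sum_{s\in\mathcal{S}:\ y_i'=y_i+\sum_{j\ne i}A^{(ij)}e_{s_j}\ \forall i}\ \prod_{j=1}^N x_{js_j}$, where $x_j=\nabla h_j^*(y_j)$. *)

From HB Require Import structures.
From mathcomp Require Import all_boot all_order all_algebra.
From mathcomp Require Import reals.
Set Implicit Arguments. Unset Strict Implicit. Unset Printing Implicit Defensive.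
Import Order.TTheory GRing.Theory Num.Theory.
Local Open Scope ring_scope.

Section NetGame.
Variables (R : realType) (N : nat) (S : 'I_N -> nat).

(* payoff matrices A^(ij) : S_i x S_j (entries A i i are irrelevant) *)
Definition payoffs := forall i j : 'I_N, 'M[R]_(S i, S j).

(* profiles of mixed strategies / payoff vectors: one column vector per agent *)
Definition state := {dffun forall i : 'I_N, 'cV[R]_(S i)}.

Definition profile := {dffun forall i : 'I_N, 'I_(S i)}.

Definition in_simplex (n : nat) (x : 'cV[R]_n) : Prop :=
  (forall k, 0 <= x k 0) /\ \sum_k x k 0 = 1.

Definition fully_mixed (n : nat) (x : 'cV[R]_n) : Prop := forall k, 0 < x k 0.

Definition network_zero_sum (A : payoffs) : Prop :=
  forall i j : 'I_N, i != j -> A i j = - (A j i)^T.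

Definition exp_payoff (A : payoffs) (x : forall i, 'cV[R]_(S i)) (i : 'I_N)
    (xi : 'cV[R]_(S i)) : R :=
  (xi^T *m \sum_(j | j != i) A i j *m x j) 0 0.

Definition is_Nash (A : payoffs) (x : forall i, 'cV[R]_(S i)) : Prop :=
  (forall i, in_simplex (x i)) /\
  forall i (xi : 'cV[R]_(S i)), in_simplex xi ->
    exp_payoff A x xi <= exp_payoff A x (x i).

Definition rational_coords (n : nat) (x : 'cV[R]_n) : Prop :=
  forall k, exists q : rat, x k 0 = ratr q.

Definition strictly_convex_on_simplex (n : nat) (h : 'cV[R]_n -> R) : Prop :=
  forall x1 x2 : 'cV[R]_n, in_simplex x1 -> in_simplex x2 -> x1 != x2 ->
  forall t : R, 0 < t < 1 ->
    h (t *: x1 + (1 - t) *: x2) < t * h x1 + (1 - t) * h x2.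

(* Q y = argmax_{x in simplex} <y, x> - h x, i.e. Q = grad h^* *)
Definition is_argmax_choice (n : nat) (h : 'cV[R]_n -> R)
    (Q : 'cV[R]_n -> 'cV[R]_n) : Prop :=
  forall y : 'cV[R]_n, in_simplex (Q y) /\
    forall x, in_simplex x ->
      (y^T *m x) 0 0 - h x <= (y^T *m Q y) 0 0 - h (Q y).

Definition step (A : payoffs) (y : state) (s : profile) : state :=
  [ffun i => y i + \sum_(j | j != i) A i j *m delta_mx (s j) (0 : 'I_1)].

(* Y = union of Y^t *)
Inductive reachable (A : payoffs) (y0 : state) : state -> Prop :=
| reach0 : reachable A y0 y0
| reachS : forall y s, reachable A y0 y -> reachable A y0 (step A y s).

Definition Pbar (A : payoffs) (Q : forall i, 'cV[R]_(S i) -> 'cV[R]_(S i))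
    (y y' : state) : R :=
  \sum_(s : profile | step A y s == y') \prod_(j : 'I_N) Q j (y j) (s j) 0.

Definition accessible (A : payoffs) (Q : forall i, 'cV[R]_(S i) -> 'cV[R]_(S i))
    (y y' : state) : Prop :=
  exists (n : nat) (z : nat -> state),
    z 0%N = y /\ z n = y' /\ forall k, (k < n)%N -> 0 < Pbar A Q (z k) (z k.+1).

Definition irreducible_on (A : payoffs) (Q : forall i, 'cV[R]_(S i) -> 'cV[R]_(S i))
    (Y : state -> Prop) : Prop :=
  forall y y', Y y -> Y y' -> accessible A Q y y'.

End NetGame.

(* A reachable state is y0 + (sum_{j<>i} A^(ij) c_j)_i, where c_j counts how
   often agent j played each pure strategy so far.  Clearing denominators gives
   x*_j = w_j / D with positive integer weights w_j of total D, and
   sum_{j<>i} A^(ij) w_j = 0.  After a history of length T every count satisfies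
   c_j <= T <= T w_j, so the chain can play profiles realizing the missing counts
   T w_j - c_j and return to y0, from which it reaches every other state of Y.
   Each transition used has positive probability since play is fully mixed on Y. *)

From HB Require Import structures.
From mathcomp Require Import all_boot all_order all_algebra.
From mathcomp Require Import reals.
From mathcomp Require Import zify.
Import Order.TTheory GRing.Theory Num.Theory.
Local Open Scope ring_scope.
Set Implicit Arguments. Unset Strict Implicit. Unset Printing Implicit Defensive.

Lemma common_denominator (R : numFieldType) (I : finType) (f : I -> R) :
    (forall i, exists q : rat, f i = ratr q) -> (forall i, 0 < f i) ->
  exists (D : nat) (w : I -> nat),
    (forall i, 0 < w i)%N /\ forall i, (w i)%:R = D%:R * f i.
Proof.
move=> /fin_all_exists[q fq] f_gt0.
have q_gt0 i : 0 < q i by rewrite -(ltr0q R) -fq.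
pose den i := `|denq (q i)|%N.
have den_gt0 i : (0 < den i)%N by rewrite absz_gt0 denq_neq0.
pose D := (\prod_i den i)%N.
have den_dvd i : (den i %| D)%N by rewrite /D (bigD1 i) //= dvdn_mulr.
exists D, (fun i => D %/ den i * `|numq (q i)|)%N; split=> i.
  by rewrite muln_gt0 divn_gt0 // dvdn_leq ?prodn_gt0 // absz_gt0 numq_eq0 gt_eqF.
rewrite fq /ratr natrM -[in RHS](divnK (den_dvd i)) natrM -mulrA; congr (_ * _).
rewrite !natr_absz !gtr0_norm ?numq_gt0 ?denq_gt0 //.
by rewrite mulrCA mulfV ?mulr1 // intr_eq0 denq_neq0.
Qed.

Lemma simplex_nat_weights (R : realType) (N : nat) (S : 'I_N -> nat)
    (x : forall j : 'I_N, 'cV[R]_(S j)) :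
    (forall j, in_simplex (x j)) -> (forall j, fully_mixed (x j)) ->
    (forall j, rational_coords (x j)) ->
  exists (D : nat) (w : forall j, 'I_(S j) -> nat),
    [/\ forall j k, (0 < w j k)%N, forall j, (\sum_k w j k)%N = D
       & forall j, \col_(k < S j) (w j k)%:R = D%:R *: x j].
Proof.
move=> x_simplex x_mixed x_rat.
have [D [w [w_gt0 wE]]] := @common_denominator R _
  (fun jk : {j : 'I_N & 'I_(S j)} => x (tag jk) (tagged jk) 0)
  (fun jk => x_rat _ _) (fun jk => x_mixed _ _).
exists D, (fun j k => w (Tagged _ k)); split=> [j k|j|j]; first exact: w_gt0.
  apply/eqP; rewrite -(eqr_nat R) natr_sum.
  under eq_bigr do rewrite wE.
  by rewrite /= -mulr_sumr; case: (x_simplex j) => _ ->; rewrite mulr1.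
by apply/matrixP => k l; rewrite !mxE wE ord1.
Qed.

Section Play.
Variables (R : realType) (N : nat) (S : 'I_N -> nat) (A : payoffs R S).

Definition play (y : state R S) (L : seq (profile S)) : state R S :=
  foldl (step A) y L.

Definition play_count (L : seq (profile S)) (j : 'I_N) (k : 'I_(S j)) : nat :=
  count (fun s : profile S => s j == k) L.
Arguments play_count L j k : clear implicits.

Lemma play_cat y L L' : play y (L ++ L') = play (play y L) L'.
Proof. exact: foldl_cat. Qed.

Lemma playE y L : play y L =
  [ffun i => y i + \sum_(j | j != i) A i j *m \col_(k < S j) (play_count L j k)%:R].
Proof.
elim: L y => [|s L IH] y /=.
  apply/ffunP => i; rewrite ffunE big1 ?addr0 // => j _.
  by apply/matrixP => k l; rewrite !mxE big1 // => m _; rewrite !mxE mulr0.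
rewrite IH; apply/ffunP => i; rewrite !ffunE -addrA -big_split /=.
congr (_ + _); apply: eq_bigr => j _; rewrite -mulmxDr; congr (_ *m _).
by apply/matrixP => k l; rewrite !mxE ord1 /= natrD eqxx andbT eq_sym.
Qed.

Lemma sum_play_count L j : (\sum_k play_count L j k)%N = size L.
Proof.
elim: L => [|s L IH] /=; first by rewrite big1.
rewrite big_split /= IH (bigD1 (s j)) //= eqxx big1 // => k.
by rewrite eq_sym => /negbTE ->.
Qed.

Lemma exists_play_count m (d : forall j, 'I_(S j) -> nat) :
  (forall j, \sum_k d j k = m)%N -> exists L, forall j k, play_count L j k = d j k.
Proof.
elim: m d => [|m IH] d sum_d.
  exists [::] => j k; apply/esym/eqP.
  by move: (sum_d j) => /eqP; rewrite sum_nat_eq0 => /forallP/(_ k).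
have /fin_all_exists[s d_s] j : exists k, (0 < d j k)%N.
  have : (\sum_k d j k != 0)%N by rewrite sum_d.
  by rewrite sum_nat_eq0 negb_forall => /existsP[k /= dk]; exists k; rewrite lt0n.
pose d' j k := (d j k - (k == s j))%N.
have sum_d' j : (\sum_k d' j k)%N = m.
  rewrite (bigD1 (s j)) //= /d' eqxx.
  under eq_bigr => k /negbTE -> do rewrite subn0.
  by move: (sum_d j) (d_s j); rewrite (bigD1 (s j)) //=; lia.
have [L count_L] := IH d' sum_d'.
exists (finfun s :: L) => j k; rewrite /play_count /= -/(play_count L j k).
rewrite count_L ffunE /d'; case: (eqVneq (s j) k) => [<-|_] /=.
  by have := d_s j; lia.
by rewrite subn0.
Qed.

Lemma play_return (D : nat) (w : forall j, 'I_(S j) -> nat) :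
    (forall j k, 0 < w j k)%N -> (forall j, \sum_k w j k = D)%N ->
    (forall i, \sum_(j | j != i) A i j *m \col_(k < S j) (w j k)%:R = 0) ->
  forall y L, exists L', play (play y L) L' = y.
Proof.
move=> w_gt0 sum_w balanced y L; set T := size L.
have count_le j k : (play_count L j k <= T * w j k)%N.
  exact: leq_trans (count_size _ _) (leq_pmulr _ (w_gt0 j k)).
have [L' count_L'] : exists L', forall j k,
    play_count L' j k = (T * w j k - play_count L j k)%N.
  apply: (@exists_play_count (T * D - T)) => j.
  rewrite sumnB => [|k _]; last exact: count_le.
  by rewrite -big_distrr /= sum_w sum_play_count.
exists L'; rewrite -play_cat playE; apply/ffunP => i; rewrite ffunE.
suff -> : \sum_(j | j != i) A i j *m \col_(k < S j) (play_count (L ++ L') j k)%:R =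
          T%:R *: \sum_(j | j != i) A i j *m \col_(k < S j) (w j k)%:R.
  by rewrite balanced scaler0 addr0.
rewrite scaler_sumr; apply: eq_bigr => j _; rewrite scalemxAr; congr (_ *m _).
apply/matrixP => k l; rewrite !mxE /play_count count_cat -!/(play_count _ j k).
by rewrite count_L' addnC subnK // natrM.
Qed.

Lemma reachable_play y0 y : reachable A y0 y -> exists L, y = play y0 L.
Proof.
elim => [|z s _ [L ->]]; first by exists [::].
by exists (rcons L s); rewrite /play foldl_rcons.
Qed.

Lemma reachable_play_closed y0 y L :
  reachable A y0 y -> reachable A y0 (play y L).
Proof. by elim: L y => //= s L IH y y_reach; apply/IH/reachS. Qed.

Lemma Pbar_step_gt0 (Q : forall i : 'I_N, 'cV[R]_(S i) -> 'cV[R]_(S i))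
    (y : state R S) (s : profile S) :
  (forall i k, 0 < Q i (y i) k 0) -> 0 < Pbar A Q y (step A y s).
Proof.
move=> Q_gt0; rewrite /Pbar (bigD1 s) //=; apply: ltr_wpDr.
  by apply: sumr_ge0 => s' _; apply: prodr_ge0 => j _; apply: ltW.
by apply: prodr_gt0.
Qed.

Lemma accessible_play (Q : forall i : 'I_N, 'cV[R]_(S i) -> 'cV[R]_(S i))
    y0 y L :
    (forall z, reachable A y0 z -> forall i k, 0 < Q i (z i) k 0) ->
  reachable A y0 y -> accessible A Q y (play y L).
Proof.
move=> Q_gt0 y_reach; exists (size L), (fun k => play y (take k L)).
split; first by rewrite take0.
split; first by rewrite take_size.
case: L => [//|s0 L] k lt_k; rewrite (take_nth s0 lt_k) /play foldl_rcons.
by apply/Pbar_step_gt0/Q_gt0/reachable_play_closed.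
Qed.

End Play.

Theorem theorem4 (R : realType) (N : nat) (S : 'I_N -> nat)
  (A : payoffs R S) (xstar : forall i : 'I_N, 'cV[R]_(S i))
  (h : forall i : 'I_N, 'cV[R]_(S i) -> R)
  (Q : forall i : 'I_N, 'cV[R]_(S i) -> 'cV[R]_(S i))
  (y0 : state R S) :
  network_zero_sum A ->
  is_Nash A xstar ->
  (forall i, fully_mixed (xstar i)) ->
  (forall i, rational_coords (xstar i)) ->
  (forall i, \sum_(j | j != i) A i j *m xstar j = 0) ->
  (forall i, strictly_convex_on_simplex (h i)) ->
  (forall i, is_argmax_choice (h i) (Q i)) ->
  (forall y, reachable A y0 y -> forall i k, 0 < Q i (y i) k 0) ->
  irreducible_on A Q (reachable A y0).
Proof.
move=> _ [xstar_simplex _] xstar_mixed xstar_rat xstar_balanced _ _ Q_gt0.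
have [D [w [w_gt0 sum_w wE]]] :=
  simplex_nat_weights xstar_simplex xstar_mixed xstar_rat.
have w_balanced i : \sum_(j | j != i) A i j *m \col_(k < S j) (w j k)%:R = 0.
  under eq_bigr => j _ do rewrite wE -scalemxAr.
  by rewrite -scaler_sumr xstar_balanced scaler0.
move=> y y' y_reach y'_reach.
have [L y_def] := reachable_play y_reach; have [L' ->] := reachable_play y'_reach.
have [L_back back] := play_return w_gt0 sum_w w_balanced y0 L.
have := accessible_play (L_back ++ L') Q_gt0 y_reach.
by rewrite play_cat y_def back.
Qed.
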